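(* Consider IMR(1) (order $p=1$) as described in the context, where exactly the first $\ell$ data points are labeled, i.e. $L=\{1,\dots,\ell\}$. If $$\left|\sum_{t=1}^{\ell-1}\left(y^{(0)}_t-x_t\right)\left(y^{(0)}_{t+1}-x_{t+1}\right)\right|<\sum_{t=1}^{\ell-1}\left(y^{(0)}_t-x_t\right)^2,$$ then $|\phi_1^{(k)}|<1$ for all iterations $k$ with $0\le k\le n-\ell$.
   Context: Let $n\ge 1$ and let $x=(x_1,\dots,x_n)\in\mathbb{R}^n$ be an observed time series. A set $L\subseteq\{1,\dots,n\}$ of labeled indices is given, together with labeled values $y^{(0)}_t$ for $t\in L$; for $t\notin L$ put $y^{(0)}_t=x_t$. Fix a threshold $\tau\ge 0$. IMR(1) produces sequences $y^{(k)}\in\mathbb{R}^n$, $k=0,1,2,\dots$; write $z^{(k)}_t=y^{(k)}_t-x_t$. In iteration $k$: (S1) $\phi^{(k)}_1=\dfrac{\sum_{t=1}^{n-1}z^{(k)}_tz^{(k)}_{t+1}}{\sum_{t=1}^{n-1}(z^{(k)}_t)^2}$ (ordinary least squares). (S2) For each $t\in\{2,\dots,n\}\setminus L$ compute $\hat y^{(k)}_t=\phi^{(k)}_1z^{(k)}_{t-1}+x_t$; $t$ is a candidate only if $|\hat y^{(k)}_t-y^{(k)}_t|>\tau$. (S3) If candidates exist, choose a candidate $t^*$ minimizing $|\hat y^{(k)}_t-x_t|$ (ties broken arbitrarily), set $y^{(k+1)}_{t^*}=\hat y^{(k)}_{t^*}$ and keep all other values; if no candidate exists, the algorithm terminates and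 $y^{(k+1)}=y^{(k)}$ from then on. Labeled values are never modified. *)

(* Time series indexed by nat; only indices 1..n matter. *)
From mathcomp Require Import all_boot all_order all_algebra.
Set Implicit Arguments. Unset Strict Implicit. Unset Printing Implicit Defensive.
Import Order.TTheory GRing.Theory Num.Theory.
Local Open Scope ring_scope.

Section IMR.
Variable R : realFieldType.

Definition resid (x y : nat -> R) (t : nat) : R := y t - x t.

(* (S1) OLS estimate of phi_1 from y (sums over t = 1 .. n-1) *)
Definition phi1 (n : nat) (x y : nat -> R) : R :=
  (\sum_(1 <= t < n) resid x y t * resid x y t.+1) /
  (\sum_(1 <= t < n) resid x y t ^+ 2).

Definition yhat (n : nat) (x y : nat -> R) (t : nat) : R :=
  phi1 n x y * resid x y t.-1 + x t.

Definition candidate (n : nat) (L : pred nat) (tau : R) (x y : nat -> R)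
    (t : nat) : Prop :=
  [/\ (2 <= t)%N, (t <= n)%N, ~~ L t & tau < `|yhat n x y t - y t| ].

(* (S3) one IMR(1) iteration y -> y' (ties broken arbitrarily; termination
   means y' = y forever afterwards) *)
Definition imr_step (n : nat) (L : pred nat) (tau : R) (x y y' : nat -> R)
    : Prop :=
  (exists ts, [/\ candidate n L tau x y ts,
      (forall t, candidate n L tau x y t ->
         `|yhat n x y ts - x ts| <= `|yhat n x y t - x t|)
    & y' = (fun t => if t == ts then yhat n x y ts else y t)])
  \/ ((forall t, ~ candidate n L tau x y t) /\ y' = y).

Definition y_init (L : pred nat) (x ylab : nat -> R) : nat -> R :=
  fun t => if L t then ylab t else x t.

End IMR.

(* Write [z = y - x] for the residuals, [S_m = sum_{t<m} z_t z_{t+1}] and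
   [A_m = sum_{t<m} z_t^2], so that [phi = S_n / A_n].  By induction on [k],
   [z^(k)] vanishes after [l + k] (a point is repaired only if its predecessor
   has a nonzero residual) and [|S_{l+k}| < A_{l+k}].  If the repair extends
   the support to [m + 1 = l + k + 1], the new residual [phi z_m] has
   [|phi| <= 1], which preserves the strict inequality.  Otherwise [z] vanishes
   at [m + 1] and keeps a nonzero labelled entry; then
   [2 |z_t z_{t+1}| <= z_t^2 + z_{t+1}^2], strictly at the last nonzero entry,
   gives [|S_{m+1}| < A_{m+1}] directly.  Finally [S_n = S_{l+k}] and
   [A_n >= A_{l+k}]. *)

From mathcomp Require Import all_boot all_order all_algebra.
From mathcomp Require Import ring lra zify.
Import Order.TTheory GRing.Theory Num.Theory.
Set Implicit Arguments. Unset Strict Implicit. Unset Printing Implicit Defensive.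
Local Open Scope ring_scope.

Lemma exists_nat_switch (P : pred nat) i j :
  (i <= j)%N -> P i -> ~~ P j.+1 -> exists2 t, (i <= t <= j)%N & P t && ~~ P t.+1.
Proof.
elim: j => [|j IH]; first by rewrite leqn0 => /eqP-> P0 nP1; exists 0%N; rewrite ?P0.
move=> hij Pi nPj.
case: (boolP (P j.+1)) => Pj; first by exists j.+1; rewrite ?leqnn ?hij ?Pj.
case: (leqP i j) => [le_ij|lt_ji]; last by move: Pj; rewrite (_ : j.+1 = i) ?Pi //; lia.
by have [t ht Pt] := IH le_ij Pi Pj; exists t => //; lia.
Qed.

Section LagOneSums.
Variable R : realFieldType.
Implicit Types (z : nat -> R) (F G : nat -> R).

Definition acov1 z m : R := \sum_(1 <= t < m) z t * z t.+1.
Definition sumsq z m : R := \sum_(1 <= t < m) z t ^+ 2.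
Definition vanishes_after z m := forall t, (m < t)%N -> z t = 0.
Definition lag1_dominated z m := `|acov1 z m| < sumsq z m.

Lemma ltr_sum_nat_at F G a b t0 : (a <= t0 < b)%N ->
  (forall t, (a <= t < b)%N -> F t <= G t) -> F t0 < G t0 ->
  \sum_(a <= t < b) F t < \sum_(a <= t < b) G t.
Proof.
move=> ht0 leFG ltFG; rewrite -subr_gt0 -sumrB lt_def.
have ge0 t : (a <= t < b)%N -> 0 <= G t - F t by move/leFG; rewrite subr_ge0.
rewrite big_nat_cond psumr_neq0 => [|t /andP[/ge0 //]].
rewrite sumr_ge0 ?andbT => [|t /andP[/ge0 //]].
by apply/hasP; exists t0; rewrite ?mem_index_iota ?ht0 //= subr_gt0.
Qed.

Lemma sum_nat_vanish F a m n : (a <= m <= n)%N ->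
  (forall t, (m <= t < n)%N -> F t = 0) ->
  \sum_(a <= t < n) F t = \sum_(a <= t < m) F t.
Proof.
move=> /andP[am mn] F0; rewrite (big_cat_nat am mn) /=.
rewrite -[RHS]addr0; congr (_ + _); rewrite big_nat big1 // => t; exact: F0.
Qed.

Lemma acov1_vanish z m n : (1 <= m <= n)%N -> vanishes_after z m ->
  acov1 z n = acov1 z m.
Proof.
move=> hm z0; apply: sum_nat_vanish => // t /andP[ht _].
by rewrite (z0 t.+1) ?mulr0.
Qed.

Lemma sumsq_vanish z m n : (m < n)%N -> vanishes_after z m ->
  sumsq z n = sumsq z m.+1.
Proof.
move=> mn z0; apply: sum_nat_vanish => [|t /andP[ht _]]; first by rewrite mn.
by rewrite z0 // expr0n.
Qed.

Lemma sumsq_le z m n : (1 <= m <= n)%N -> sumsq z m <= sumsq z n.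
Proof.
move=> /andP[hm mn]; rewrite /sumsq (big_cat_nat hm mn) /= lerDl.
by apply: sumr_ge0 => t _; apply: sqr_ge0.
Qed.

Lemma eq_acov1 z z' m : (forall t, (1 <= t <= m)%N -> z t = z' t) ->
  acov1 z m = acov1 z' m.
Proof.
by move=> zz'; apply: eq_big_nat => t ht; rewrite !zz' //; lia.
Qed.

Lemma eq_sumsq z z' m : (forall t, (1 <= t <= m)%N -> z t = z' t) ->
  sumsq z m = sumsq z' m.
Proof.
by move=> zz'; apply: eq_big_nat => t ht; rewrite zz' //; lia.
Qed.

Lemma acov1S z m : (1 <= m)%N -> acov1 z m.+1 = acov1 z m + z m * z m.+1.
Proof. exact: big_nat_recr. Qed.

Lemma sumsqS z m : (1 <= m)%N -> sumsq z m.+1 = sumsq z m + z m ^+ 2.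
Proof. exact: big_nat_recr. Qed.

Lemma sumsq_neq0 z m : sumsq z m != 0 -> exists2 i, (1 <= i < m)%N & z i != 0.
Proof.
rewrite /sumsq big_nat_cond psumr_neq0 => [/hasP[i]|i _]; last exact: sqr_ge0.
rewrite mem_index_iota => hi /andP[_]; rewrite lt_def sqrf_eq0 => /andP[zi _].
by exists i.
Qed.

Lemma lag1_dominated_succ z m i : vanishes_after z m ->
  (1 <= i <= m)%N -> z i != 0 -> lag1_dominated z m.+1.
Proof.
move=> z0 /andP[i1 im] zi.
have zmS : ~~ (z m.+1 != 0) by rewrite negbK z0.
have [t0 /andP[it0 t0m] /andP[zt0 /negPn/eqP zt0S]] :=
  exists_nat_switch (P := fun t => z t != 0) im zi zmS.
have norm_le : 2 * `|acov1 z m.+1| <= \sum_(1 <= t < m.+1) 2 * `|z t * z t.+1|.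
  by rewrite -mulr_sumr ler_pM2l ?ler_norm_sum.
have amgm_lt : \sum_(1 <= t < m.+1) 2 * `|z t * z t.+1| <
               \sum_(1 <= t < m.+1) (z t ^+ 2 + z t.+1 ^+ 2).
  apply: (ltr_sum_nat_at (t0 := t0)); first lia.
    move=> t _; rewrite normrM mulr_natl.
    by have := (leif_mean_square_scaled `|z t| `|z t.+1|).1; rewrite !real_normK ?num_real.
  by rewrite zt0S mulr0 normr0 mulr0 expr0n addr0 lt_def sqrf_eq0 zt0 sqr_ge0.
have shift : sumsq z m.+2 = z 1%N ^+ 2 + \sum_(1 <= t < m.+1) z t.+1 ^+ 2.
  exact: big_nat_recl.
rewrite sumsqS // z0 // expr0n addr0 in shift.
rewrite big_split /= -/(sumsq z m.+1) in amgm_lt.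
have := sqr_ge0 (z 1%N); rewrite /lag1_dominated; lra.
Qed.

Lemma extend_dominated (S A u : R) : `|S| < A -> 0 <= u ->
  `|S + S / (A + u) * u| < A + u.
Proof.
move=> SA u0; have Au : 0 < A + u by have := normr_ge0 S; lra.
have q_le1 : `|S / (A + u)| <= 1.
  by rewrite normrM normfV (gtr0_norm Au) ler_pdivrMr // mul1r; lra.
have qu_le : `|S / (A + u)| * u <= u by rewrite ler_piMl.
by rewrite (le_lt_trans (ler_normD _ _)) // normrM (ger0_norm u0); lra.
Qed.

Lemma dominated_ratio_lt1 z m n : (1 <= m <= n)%N -> vanishes_after z m ->
  lag1_dominated z m -> `|acov1 z n / sumsq z n| < 1.
Proof.
move=> mn z0 dom; rewrite (acov1_vanish mn z0).
have dom_n := lt_le_trans dom (sumsq_le z mn).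
have sq_gt0 : 0 < sumsq z n := le_lt_trans (normr_ge0 _) dom_n.
by rewrite normrM normfV (gtr0_norm sq_gt0) ltr_pdivrMr // mul1r.
Qed.

End LagOneSums.

Section IMRStep.
Variables (R : realFieldType) (n : nat) (L : pred nat) (tau : R) (x : nat -> R).
Hypothesis tau_ge0 : 0 <= tau.

Lemma candidate_le y m t : vanishes_after (resid x y) m ->
  candidate n L tau x y t -> (t <= m.+1)%N.
Proof.
move=> z0 [_ _ _]; rewrite leqNgt; apply: contraL => mt.
have -> : yhat n x y t - y t = phi1 n x y * resid x y t.-1 - resid x y t.
  by rewrite /yhat /resid; ring.
by rewrite !z0 ?mulr0 ?subr0 ?normr0 -?leNgt //; lia.
Qed.

Variable i0 : nat.
Hypotheses (L_i0 : L i0) (i0_gt0 : (0 < i0)%N).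

Lemma imr_step_dominated y y' m : (m < n)%N -> (i0 <= m)%N ->
  vanishes_after (resid x y) m -> resid x y i0 != 0 ->
  lag1_dominated (resid x y) m -> imr_step n L tau x y y' ->
  [/\ vanishes_after (resid x y') m.+1, resid x y' i0 != 0
    & lag1_dominated (resid x y') m.+1].
Proof.
move=> mn i0m z0 zi0 dom [[ts [cand _ ->]] | [_ ->]]; last first.
  split=> //; first by move=> t mt; apply: z0; lia.
  by apply: (lag1_dominated_succ z0 _ zi0); lia.
have tsm := candidate_le z0 cand; have [_ _ Lts _] := cand.
set z := resid x y; set z' := resid x _.
have z'E t : z' t = if t == ts then phi1 n x y * z ts.-1 else z t.
  by rewrite /z' /z /resid; case: eqP => // ->; rewrite /yhat addrK.
have z'_out t : t != ts -> z' t = z t by rewrite z'E => /negbTE->.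
have z'i0 : z' i0 = z i0 by apply: z'_out; apply: contraNneq Lts => <-.
have [tsE|tsN] := eqVneq ts m.+1; last first.
  have {}tsm : (ts <= m)%N by move: tsm; rewrite leq_eqVlt (negbTE tsN).
  have z'0 : vanishes_after z' m.
    by move=> t mt; rewrite z'_out; [exact: z0 | apply/eqP; lia].
  split; [by move=> t mt; apply: z'0; lia | by rewrite z'i0 |].
  by apply: (lag1_dominated_succ z'0 _ (_ : z' i0 != 0)); rewrite ?z'i0 //; lia.
split; [|by rewrite z'i0|].
  by move=> t mt; rewrite z'_out; [apply: z0 | apply/eqP]; lia.
have m1 : (1 <= m)%N by lia.
have z'_le t : (1 <= t <= m)%N -> z' t = z t by move=> ht; apply: z'_out; apply/eqP; lia.
have phiE : phi1 n x y = acov1 z m / (sumsq z m + z m ^+ 2).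
  rewrite [LHS](_ : _ = acov1 z n / sumsq z n) //.
  by rewrite (acov1_vanish (m := m)) ?m1 ?(ltnW mn) // (sumsq_vanish mn z0) sumsqS.
(* Repairing [m + 1] with [phi = S / (A + z_m^2)] adds [phi z_m^2] to [S]
   and [z_m^2] to [A]. *)
rewrite /lag1_dominated acov1S // sumsqS // (eq_acov1 z'_le) (eq_sumsq z'_le).
rewrite z'_le ?m1 ?leqnn // z'E tsE eqxx /= phiE.
rewrite (_ : z m * _ = acov1 z m / (sumsq z m + z m ^+ 2) * z m ^+ 2); last by ring.
exact: extend_dominated (sqr_ge0 _).
Qed.

End IMRStep.

Theorem lemma2 (R : realFieldType) (n l : nat) (x ylab : nat -> R) (tau : R)
  (Y : nat -> nat -> R) :
  (1 <= n)%N -> (l <= n)%N -> 0 <= tau ->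
  let L : pred nat := fun t => (1 <= t <= l)%N in
  Y 0%N = y_init L x ylab ->
  (forall k, imr_step n L tau x (Y k) (Y k.+1)) ->
  `|\sum_(1 <= t < l) (Y 0%N t - x t) * (Y 0%N t.+1 - x t.+1)|
     < \sum_(1 <= t < l) (Y 0%N t - x t) ^+ 2 ->
  forall k, (k <= n - l)%N -> `|phi1 n x (Y k)| < 1.
Proof.
move=> _ ln tau0 L Y0 step dom0.
have [i0 /andP[i0_gt0 i0l] zi0] : exists2 i, (1 <= i < l)%N & resid x (Y 0%N) i != 0.
  by apply: sumsq_neq0; rewrite lt0r_neq0 // (le_lt_trans (normr_ge0 _) dom0).
have L_i0 : L i0 by rewrite /L i0_gt0 ltnW.
have inv j : (j <= n - l)%N -> [/\ vanishes_after (resid x (Y j)) (l + j),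
    resid x (Y j) i0 != 0 & lag1_dominated (resid x (Y j)) (l + j)].
  elim: j => [_|j IH jnl]; rewrite ?addn0 ?addnS.
    split=> // t lt; rewrite Y0 /resid /y_init /L ifF ?subrr //; lia.
  have [z0 zi0' dom] := IH (ltnW jnl).
  apply: (imr_step_dominated tau0 L_i0 i0_gt0 _ _ z0 zi0' dom (step j)); lia.
move=> k kn; have [z0 _ dom] := inv k kn.
by apply: (dominated_ratio_lt1 _ z0 dom); lia.
Qed.
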